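(* Let $(A,+,\circ)$ be a finite skew brace and let $(A,r_A)$ be its associated sb-solution. If $A$ is supersoluble, then the solution $(A,r_A)$ is supersoluble at $0$ (i.e. $(A,r_A)$ is a supersoluble sb-solution).
   Context: A skew brace is a set $A$ with two group structures $(A,+)$ and $(A,\circ)$ such that $a\circ(b+c)=a\circ b-a+a\circ c$ for all $a,b,c\in A$; the identities of both groups coincide and are denoted $0$. For $a\in A$ put $\lambda_a(b)=-a+a\circ b$; then $\lambda_a\in\mathrm{Aut}(A,+)$ and $a\mapsto\lambda_a$ is a homomorphism from $(A,\circ)$. An ideal of $A$ is a subgroup $I$ of $(A,+)$ with $\lambda_a(I)=I$ for all $a$, normal in both $(A,+)$ and $(A,\circ)$. A finite skew brace is supersoluble if there is a chain of ideals $\{0\}=I_0\subseteq I_1\subseteq\dots\subseteq I_m=A$ with $|I_{i+1}/I_i|$ prime for all $i$. A solution of the Yang--Baxter equation is a pair $(X,r)$ with $r(x,y)=(\lambda_x(y),\rho_y(x))$ a bijection of $X\times X$ satisfying $r_{12}r_{23}r_{12}=r_{23}r_{12}r_{23}$ (where $r_{12}=r\times\mathrm{id}_X$, $r_{23}=\mathrm{id}_X\times r$), with all $\lambda_x,\rho_x$ bijective. The sb-solution associated with $A$ is $(A,r_A)$ with $r_A(a,b)=(\lambda_a(b),\lambda_a(b)^{-1}\circ a\circ b)$, where $^{-1}$ is the inverse in $(A,\circ)$. A solution $(X,r)$ is trivial if $|X|\ge 2$ and $r(x,y)=(y,x)$. A morphism $f:(X,r)\to(Y,s)$ of solutions is a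 map $f:X\to Y$ with $(f\times f)\circ r=s\circ(f\times f)$; write $x\sim_f y$ iff $f(x)=f(y)$. If $Z\subseteq X$ satisfies $\lambda_x(Z)=Z=\rho_x(Z)$ for all $x\in X$, then $s$ restricts to a solution on $f(Z)$. A finite solution $(X,r)$ is supersoluble at $x_0\in X$ if there is a chain of subsets $\{x_0\}=X_0\subseteq X_1\subseteq\dots\subseteq X_m=X$ and, for each $i=0,\dots,m-1$, a solution $(Y_i,s_i)$ and a morphism $f_i:(X,r)\to(Y_i,s_i)$ such that: (1) $X_i$ is an equivalence class of $\sim_{f_i}$; (2) all equivalence classes of $\sim_{f_i}$ have size $|X_i|$; (3) $X_{i+1}$ is a union of equivalence classes of $\sim_{f_i}$; (4) $\lambda_x(X_{i+1})=X_{i+1}$ and $\rho_x(X_{i+1})=X_{i+1}$ for all $x\in X$; (5) the restriction of $s_i$ to $f_i(X_{i+1})\times f_i(X_{i+1})$ is a trivial solution on $f_i(X_{i+1})$ of prime cardinality. An sb-solution $(A,r_A)$ is called supersoluble if it is supersoluble at $0$. *)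

From mathcomp Require Import all_boot.
Set Implicit Arguments. Unset Strict Implicit. Unset Printing Implicit Defensive.

Record skew_brace (T : finType) := SkewBrace {
  sb_add  : T -> T -> T;
  sb_opp  : T -> T;
  sb_zero : T;
  sb_circ : T -> T -> T;
  sb_cinv : T -> T;
  sb_addA : forall a b c, sb_add a (sb_add b c) = sb_add (sb_add a b) c;
  sb_add0l : forall a, sb_add sb_zero a = a;
  sb_add0r : forall a, sb_add a sb_zero = a;
  sb_addNl : forall a, sb_add (sb_opp a) a = sb_zero;
  sb_addNr : forall a, sb_add a (sb_opp a) = sb_zero;
  sb_circA : forall a b c, sb_circ a (sb_circ b c) = sb_circ (sb_circ a b) c;
  sb_circ0l : forall a, sb_circ sb_zero a = a;
  sb_circ0r : forall a, sb_circ a sb_zero = a;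
  sb_circVl : forall a, sb_circ (sb_cinv a) a = sb_zero;
  sb_circVr : forall a, sb_circ a (sb_cinv a) = sb_zero;
  sb_brace : forall a b c,
    sb_circ a (sb_add b c) = sb_add (sb_add (sb_circ a b) (sb_opp a)) (sb_circ a c)
}.

Section SkewBraceDefs.
Variables (T : finType) (B : skew_brace T).

Let add := sb_add B.
Let opp := sb_opp B.
Let circ := sb_circ B.

Definition sb_lambda (a b : T) : T := add (opp a) (circ a b).

Definition is_ideal (I : {set T}) : Prop :=
  [/\
      [/\ sb_zero B \in I,
          (forall x y, x \in I -> y \in I -> add x y \in I) &
          (forall x, x \in I -> opp x \in I)],
      (forall x y, x \in I -> y \in I -> circ x y \in I) /\
      (forall x, x \in I -> sb_cinv B x \in I),
      (forall a, [set sb_lambda a x | x in I] = I),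
      (forall a x, x \in I -> add (add a x) (opp a) \in I) &
      (forall a x, x \in I -> circ (circ a x) (sb_cinv B a) \in I)].

(** Supersoluble skew brace: chain of ideals 0 = I_0 <= ... <= I_m = A
    with |I_{i+1}/I_i| = |I_{i+1}|/|I_i| prime. *)
Definition supersoluble_brace : Prop :=
  exists (m : nat) (I : nat -> {set T}),
    [/\ I 0 = [set sb_zero B],
        I m = [set: T],
        (forall i, i <= m -> is_ideal (I i)) &
        (forall i, i < m -> I i \subset I i.+1 /\ prime (#|I i.+1| %/ #|I i|))].

Definition sb_solution (p : T * T) : T * T :=
  let: (a, b) := p in
  (sb_lambda a b, circ (circ (sb_cinv B (sb_lambda a b)) a) b).

End SkewBraceDefs.

Section Solutions.

Definition sol_lambda (X : Type) (r : X * X -> X * X) (x : X) : X -> X :=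
  fun y => (r (x, y)).1.
Definition sol_rho (X : Type) (r : X * X -> X * X) (y : X) : X -> X :=
  fun x => (r (x, y)).2.

Definition r12 (X : Type) (r : X * X -> X * X) (t : X * X * X) : X * X * X :=
  let: (x, y, z) := t in let: (a, b) := r (x, y) in (a, b, z).
Definition r23 (X : Type) (r : X * X -> X * X) (t : X * X * X) : X * X * X :=
  let: (x, y, z) := t in let: (b, c) := r (y, z) in (x, b, c).

Definition is_solution (X : Type) (r : X * X -> X * X) : Prop :=
  [/\ bijective r,
      (forall x, bijective (sol_lambda r x)),
      (forall x, bijective (sol_rho r x)) &
      (forall t, r12 r (r23 r (r12 r t)) = r23 r (r12 r (r23 r t)))].

Definition is_sol_morphism (X Y : Type) (r : X * X -> X * X)
    (s : Y * Y -> Y * Y) (f : X -> Y) : Prop :=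
  forall p : X * X, (f (r p).1, f (r p).2) = s (f p.1, f p.2).

(** Supersolubility of a finite solution (X, r) at x0.  The image
    f(X_{i+1}) is taken in an eqType Y, its cardinality being the number
    of distinct values of f on X_{i+1}. *)
Definition supersoluble_solution_at (X : finType) (r : X * X -> X * X)
    (x0 : X) : Prop :=
  exists (m : nat) (Xs : nat -> {set X}),
    [/\ Xs 0 = [set x0],
        Xs m = [set: X],
        (forall i, i < m -> Xs i \subset Xs i.+1) &
        (forall i, i < m ->
          exists (Y : eqType) (s : Y * Y -> Y * Y) (f : X -> Y),
            [/\ is_solution s /\ is_sol_morphism r s f,
                (* (1) X_i is an equivalence class of ~_f *)
                (exists x, Xs i = [set y | f y == f x]),
                (forall x, #|[set y | f y == f x]| = #|Xs i|),
                (forall x y, f x = f y -> x \in Xs i.+1 -> y \in Xs i.+1) /\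
                (forall x, [set sol_lambda r x y | y in Xs i.+1] = Xs i.+1 /\
                           [set sol_rho r x y | y in Xs i.+1] = Xs i.+1) &
                (* (5) s restricted to f(X_{i+1}) is trivial of prime size *)
                ((forall y z, y \in Xs i.+1 -> z \in Xs i.+1 ->
                     s (f y, f z) = (f z, f y)) /\
                 prime (size (undup [seq f x | x <- enum (Xs i.+1)])))])].

End Solutions.

From HB Require Import structures.
From mathcomp Require Import all_boot all_fingroup.
From mathcomp Require Import cyclic pgroup sylow.
Set Implicit Arguments. Unset Strict Implicit. Unset Printing Implicit Defensive.

(* For each step I_i <= I_(i+1) of the chain of ideals, project (A, o) onto
   its quotient by the normal subgroup I_i.  Since I_i is an ideal, lambda and
   rho respect the cosets of I_i, so r_A induces a solution on A / I_i for
   which the projection is a morphism with the cosets of I_i as fibres; ideals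
   are lambda- and rho-invariant.  For y in I_(i+1), lambda_y permutes the
   group I_(i+1) / I_i of prime order p with order dividing p and fixes 1, so
   counting fixed points modulo p shows that it acts trivially; rho is then
   trivial as well, because I_(i+1) / I_i is cyclic, hence abelian. *)

Local Open Scope group_scope.

Lemma fin_surj_bij (X : finType) (g : X -> X) :
  (forall y, exists x, g x = y) -> bijective g.
Proof.
move=> g_surj; have gP y : exists x, g x == y.
  by have [x <-] := g_surj y; exists x.
pose g' y := xchoose (gP y).
have gK : cancel g' g by move=> y; apply/eqP/(xchooseP (gP y)).
exact: (bij_can_bij (injF_bij (can_inj gK)) gK).
Qed.

Lemma perm_prime_fix (X : finType) (s : {perm X}) (A : {set X}) p (x0 : X) :
  prime p -> s ^+ p = 1 -> #|A| = p -> (forall x, (s x \in A) = (x \in A)) ->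
  x0 \in A -> s x0 = x0 -> {in A, forall x, s x = x}.
Proof.
move=> pr_p sp1 cardA sA Ax0 sx0.
have pG : p.-group <[s]>.
  by rewrite /pgroup -orderE (pnat_dvd _ (pnat_id pr_p)) // order_dvdn sp1.
have nAs : [acts <[s]>, on A | 'P] by rewrite cycle_subG; apply/astabsP.
have := pgroup_fix_mod pG nAs; rewrite afix_cycle cardA modnn => /esym/eqP.
set F := _ :&: _ => p_dv_F.
have x0F : x0 \in F by rewrite inE Ax0; apply/afix1P.
have /eqP AF : F == A.
  rewrite eqEcard subsetIl cardA dvdn_leq //.
  by apply/card_gt0P; exists x0.
by move=> x; rewrite -AF => /setIP[_ /afix1P].
Qed.

Section SolutionImage.
Variables (X : Type) (Y : finType) (r : X * X -> X * X) (s : Y * Y -> Y * Y).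
Variable f : X -> Y.
Hypotheses (f_surj : forall y, exists x, f x = y).
Hypothesis f_morph : is_sol_morphism r s f.

Lemma sol_lambda_morph x w : sol_lambda s (f x) (f w) = f (sol_lambda r x w).
Proof. by rewrite /sol_lambda -(f_morph (x, w)). Qed.

Lemma sol_rho_morph x w : sol_rho s (f x) (f w) = f (sol_rho r x w).
Proof. by rewrite /sol_rho -(f_morph (w, x)). Qed.

Let f3 (t : X * X * X) : Y * Y * Y := (f t.1.1, f t.1.2, f t.2).

Lemma r12_morph t : r12 s (f3 t) = f3 (r12 r t).
Proof.
by case: t => [[x y] z]; rewrite /r12 /f3 /= -(f_morph (x, y)); case: (r _).
Qed.

Lemma r23_morph t : r23 s (f3 t) = f3 (r23 r t).
Proof.
by case: t => [[x y] z]; rewrite /r23 /f3 /= -(f_morph (y, z)); case: (r _).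
Qed.

Lemma solution_image : is_solution r -> is_solution s.
Proof.
case=> [[ri rK riK] lam_bij rho_bij ybe]; split.
- apply: fin_surj_bij => -[u v].
  have [x <-] := f_surj u; have [y <-] := f_surj v.
  exists (f (ri (x, y)).1, f (ri (x, y)).2).
  by rewrite -(f_morph (ri (x, y))) riK.
- move=> u; apply: fin_surj_bij => v.
  have [x <-] := f_surj u; have [w <-] := f_surj v.
  have [li _ liK] := lam_bij x.
  by exists (f (li w)); rewrite sol_lambda_morph liK.
- move=> u; apply: fin_surj_bij => v.
  have [x <-] := f_surj u; have [w <-] := f_surj v.
  have [ri' _ riK'] := rho_bij x.
  by exists (f (ri' w)); rewrite sol_rho_morph riK'.
- move=> [[u v] w].
  have [x <-] := f_surj u; have [y <-] := f_surj v; have [z <-] := f_surj w.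
  have -> : (f x, f y, f z) = f3 (x, y, z) by [].
  by rewrite !(r12_morph, r23_morph) ybe.
Qed.

End SolutionImage.

Definition circ_group (T : finType) (B : skew_brace T) : Type := T.
HB.instance Definition _ (T : finType) (B : skew_brace T) :=
  Finite.on (circ_group B).
HB.instance Definition _ (T : finType) (B : skew_brace T) :=
  Finite_isGroup.Build (circ_group B) (@sb_circA T B) (@sb_circ0l T B)
    (@sb_circVl T B).

Section BraceMaps.
Variables (T : finType) (B : skew_brace T).
Local Notation G := (circ_group B).
Local Notation add := (sb_add B).
Local Notation opp := (sb_opp B).

Lemma sb_addKl a b : add (opp a) (add a b) = b.
Proof. by rewrite sb_addA sb_addNl sb_add0l. Qed.

Lemma sb_addNKl a b : add a (add (opp a) b) = b.
Proof. by rewrite sb_addA sb_addNr sb_add0l. Qed.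

Lemma sb_oppK a : opp (opp a) = a.
Proof. by rewrite -[RHS](sb_addKl (opp a)) sb_addNl sb_add0r. Qed.

Definition lam (a b : G) : G := sb_lambda B a b.
(* [rho b a] is rho_b(a), the second component of r_A(a, b). *)
Definition rho (b a : G) : G := (lam a b)^-1 * a * b.

Lemma circ_lam (a b : G) : a * b = add a (lam a b).
Proof. by rewrite /lam /sb_lambda sb_addNKl. Qed.

Lemma circD (a b c : G) : a * add b c = add (add (a * b) (opp a)) (a * c).
Proof. exact: (sb_brace B a b c). Qed.

Lemma lamD (a b c : G) : lam a (add b c) = add (lam a b) (lam a c).
Proof. by rewrite /lam /sb_lambda sb_brace !sb_addA. Qed.

Lemma lamg1 (a : G) : lam a 1 = 1.
Proof. by rewrite /lam /sb_lambda sb_circ0r sb_addNl. Qed.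

Lemma lamM (a b c : G) : lam (a * b) c = lam a (lam b c).
Proof.
rewrite {1}/lam /sb_lambda -[sb_circ B _ c]/((a * b) * c) -mulgA (circ_lam b).
by rewrite circD -!sb_addA sb_addKl.
Qed.

Lemma lam1g (c : G) : lam 1 c = c.
Proof. by rewrite /lam /sb_lambda sb_circ0l -{1}(sb_add0l B c) sb_addKl. Qed.

Lemma lamK (a : G) : cancel (lam a) (lam a^-1).
Proof. by move=> c; rewrite -lamM mulVg lam1g. Qed.

Lemma lamKV (a : G) : cancel (lam a^-1) (lam a).
Proof. by move=> c; rewrite -lamM mulgV lam1g. Qed.

Lemma lam_rho (a b : G) : lam a b * rho b a = a * b.
Proof. by rewrite /rho !mulgA mulgV mul1g. Qed.

Lemma lamMr (x a b : G) : lam x (a * b) = lam x a * lam (rho a x) b.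
Proof. by rewrite [a * b]circ_lam lamD -lamM [RHS]circ_lam -lamM lam_rho. Qed.

Lemma rhoM (a b x : G) : rho (a * b) x = rho b (rho a x).
Proof. by rewrite {1}/rho lamMr invMg /rho !mulgA. Qed.

Lemma rho1g (x : G) : rho 1 x = x.
Proof. by rewrite /rho lamg1 invg1 mul1g mulg1. Qed.

Lemma rhoK (a : G) : cancel (rho a) (rho a^-1).
Proof. by move=> x; rewrite -rhoM mulgV rho1g. Qed.

Lemma rhoKV (a : G) : cancel (rho a^-1) (rho a).
Proof. by move=> x; rewrite -rhoM mulVg rho1g. Qed.

Lemma sb_solution_surj (u v : G) : exists x y : G, lam x y = u /\ rho y x = v.
Proof.
pose x : G := add (u * v) (opp u).
have xu : add x u = u * v by rewrite -sb_addA sb_addNl sb_add0r.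
have lam_x : lam x (x^-1 * (u * v)) = u.
  rewrite /lam /sb_lambda -[sb_circ B x _]/(x * (x^-1 * (u * v))) mulKVg.
  by rewrite -xu sb_addKl.
by exists x, (x^-1 * (u * v)); rewrite /rho lam_x -mulgA mulKVg mulKg.
Qed.

Lemma sb_ybe (x y z : G) :
  (lam (lam x y) (lam (rho y x) z), rho (lam (rho y x) z) (lam x y),
   rho z (rho y x)) =
  (lam x (lam y z), lam (rho (lam y z) x) (rho z y),
   rho (rho z y) (rho (lam y z) x)).
Proof.
have e1 : lam (lam x y) (lam (rho y x) z) = lam x (lam y z).
  by rewrite -lamM lam_rho lamM.
have e3 : rho z (rho y x) = rho (rho z y) (rho (lam y z) x).
  by rewrite -!rhoM lam_rho.
congr (_, _, _) => //; apply: (mulgI (lam x (lam y z))).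
apply: (mulIg (rho z (rho y x))).
rewrite -{1}e1 lam_rho -mulgA lam_rho mulgA lam_rho e3.
by rewrite -lamMr lam_rho -rhoM !lam_rho mulgA.
Qed.

Lemma sb_solution_is_solution : is_solution (sb_solution B).
Proof.
split.
- apply: fin_surj_bij => -[u v].
  by have [x [y [<- <-]]] := sb_solution_surj u v; exists (x, y).
- by move=> a; exists (lam (a : G)^-1); [exact: lamK | exact: lamKV].
- by move=> b; exists (rho (b : G)^-1); [exact: rhoK | exact: rhoKV].
- by move=> [[x y] z]; exact: sb_ybe.
Qed.

End BraceMaps.

Section IdealQuotient.
Variables (T : finType) (B : skew_brace T).
Local Notation G := (circ_group B).
Local Notation add := (sb_add B).
Local Notation opp := (sb_opp B).

Definition circ_set (A : {set T}) : {set G} := [set x : G | (x : T) \in A].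

Lemma card_circ_set (P : pred T) :
  #|[set x : G | P x]| = #|[set x : T | P x]|.
Proof. by rewrite !cardsE !cardE /enum_mem !unlock. Qed.

Lemma ideal_group_set I : is_ideal B I -> group_set (circ_set I).
Proof.
case=> [[I0 _ _] [IM _] _ _ _]; apply/group_setP; split; first by rewrite inE.
by move=> x y; rewrite !inE; exact: IM.
Qed.

Variables (I : {set T}) (hI : is_ideal B I).

Definition ideal_group : {group G} := Group (ideal_group_set hI).
Local Notation N := ideal_group.
Local Notation f := (coset N).

Lemma mem_ideal_group (x : G) : (x \in N) = (x \in I).
Proof. by rewrite inE. Qed.

Lemma card_ideal_group : #|N| = #|I|.
Proof.
by rewrite /= /circ_set card_circ_set; apply: eq_card => x; rewrite inE.
Qed.

Lemma ideal_norm (a : G) : a \in 'N(N).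
Proof.
case: hI => _ _ _ _ IJ; rewrite inE; apply/subsetP => _ /imsetP[n nN ->].
rewrite mem_ideal_group conjgE mulgA -{2}(invgK a).
by apply: (IJ a^-1); rewrite -mem_ideal_group.
Qed.

Lemma ideal_lam (a n : G) : n \in N -> lam a n \in N.
Proof.
case: hI => _ _ IL _ _; rewrite !mem_ideal_group => nI.
by rewrite -(IL a); apply: imset_f.
Qed.

Lemma mem_ideal_lam (a n : G) : (lam a n \in N) = (n \in N).
Proof. by apply/idP/idP => [/(ideal_lam a^-1) | /ideal_lam //]; rewrite lamK. Qed.

Lemma coset_addr (w n : G) : n \in N -> f (add w n) = f w.
Proof.
move=> nN; have -> : add w n = w * lam w^-1 n.
  by rewrite circ_lam -lamM mulgV lam1g.
by rewrite coset_kerr ?ideal_lam.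
Qed.

Lemma coset_addl (w n : G) : n \in N -> f (add n w) = f w.
Proof.
case: hI => _ _ _ IA _ nN.
have -> : add n w = add w (add (add (opp w) n) (opp (opp w))).
  by rewrite sb_oppK -sb_addA sb_addNKl.
by rewrite coset_addr // mem_ideal_group IA // -mem_ideal_group.
Qed.

Lemma coset_lam_ideal (n w : G) : n \in N -> f (lam n w) = f w.
Proof.
case: hI => [[_ _ IN] _ _ _ _] nN.
rewrite /lam /sb_lambda coset_addl -?[sb_circ B n w]/(n * w) ?coset_kerl //.
by rewrite mem_ideal_group IN // -mem_ideal_group.
Qed.

Lemma ideal_cosetM (a b : G) : f (a * b) = f a * f b.
Proof. by rewrite morphM ?ideal_norm. Qed.

Lemma ideal_cosetV (a : G) : f a^-1 = (f a)^-1.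
Proof. by rewrite morphV ?ideal_norm. Qed.

Lemma ideal_coset_eq (a b : G) : f a = f b -> exists2 n, n \in N & a = n * b.
Proof. exact: kercoset_rcoset (ideal_norm a) (ideal_norm b). Qed.

Lemma coset_lamr (x a b : G) : f a = f b -> f (lam x a) = f (lam x b).
Proof.
move=> /ideal_coset_eq[n nN ->].
have nxN : x * n * x^-1 \in N.
  by rewrite -{1}(invgK x) -mulgA -conjgE memJ_norm ?groupV ?ideal_norm.
rewrite circ_lam lamD coset_addl ?ideal_lam // -lamM -(mulgKV x (x * n)).
by rewrite lamM coset_lam_ideal.
Qed.

Lemma coset_lam (x x' y y' : G) :
  f x = f x' -> f y = f y' -> f (lam x y) = f (lam x' y').
Proof.
move=> /esym/ideal_coset_eq[n nN ->].
by move=> /(coset_lamr x) ->; rewrite lamM [RHS]coset_lam_ideal.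
Qed.

Lemma coset_rho (x x' y y' : G) :
  f x = f x' -> f y = f y' -> f (rho y x) = f (rho y' x').
Proof.
move=> fx fy; rewrite /rho !ideal_cosetM !ideal_cosetV fx fy.
by rewrite (coset_lam fx fy).
Qed.

Lemma ideal_rho (x y : G) : y \in N -> rho x y \in N.
Proof.
move=> yN; apply: coset_idr; first exact: ideal_norm.
rewrite /rho !ideal_cosetM ideal_cosetV coset_lam_ideal //.
by rewrite (coset_id yN) mulg1 mulVg.
Qed.

Lemma ideal_lam_image (x : T) :
  [set sol_lambda (sb_solution B) x y | y in I] = I.
Proof. by case: hI => _ _ IL _ _; apply: IL. Qed.

Lemma ideal_rho_image (x : T) :
  [set sol_rho (sb_solution B) x y | y in I] = I.
Proof.
apply/eqP; rewrite eqEcard card_imset; last exact: can_inj (@rhoK _ B x).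
rewrite leqnn andbT; apply/subsetP => _ /imsetP[y yI ->].
by rewrite -mem_ideal_group ideal_rho // mem_ideal_group.
Qed.

Definition quotient_solution (q : coset_of N * coset_of N) :=
  (f (lam (repr q.1) (repr q.2)), f (rho (repr q.2) (repr q.1))).

Lemma quotient_solutionE (x y : G) :
  quotient_solution (f x, f y) = (f (lam x y), f (rho y x)).
Proof.
by rewrite /quotient_solution /=; congr pair;
  [apply: coset_lam | apply: coset_rho]; rewrite coset_reprK.
Qed.

Lemma coset_sol_morphism : is_sol_morphism (sb_solution B) quotient_solution f.
Proof. by move=> [x y]; rewrite quotient_solutionE. Qed.

Lemma quotient_solution_is_solution : is_solution quotient_solution.
Proof.
apply: (solution_image _ coset_sol_morphism); last exact: sb_solution_is_solution.
by move=> c; exists (repr c); rewrite coset_reprK.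
Qed.

Lemma coset_class (x y : G) : (f y == f x) = (y \in N :* x).
Proof. by apply/eqP/idP => /rcoset_kercosetP; apply; apply: ideal_norm. Qed.

Lemma coset_class1 : [set y : T | f y == f 1] = I.
Proof. by apply/setP => y; rewrite inE coset_class rcoset1 mem_ideal_group. Qed.

Lemma card_coset_class (x : G) : #|[set y : T | f y == f x]| = #|I|.
Proof.
rewrite -(card_circ_set (fun y => f y == f x)) -card_ideal_group.
rewrite -(card_rcoset N x).
by apply: eq_card => y; rewrite inE coset_class.
Qed.

Lemma size_undup_coset (A : {set T}) :
  size (undup [seq f x | x <- enum A]) = #|circ_set A / N|.
Proof.
rewrite -(card_uniqP (undup_uniq _)); apply: eq_card => u; rewrite mem_undup.
apply/mapP/morphimP => [[x xA ->] | [x _ xA ->]]; exists x => //.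
- exact: ideal_norm.
- by rewrite inE -mem_enum.
- by move: xA; rewrite inE -mem_enum.
Qed.

Definition coset_lam_fun (y : G) (c : coset_of N) : coset_of N :=
  f (lam y (repr c)).

Lemma coset_lam_funE (y w : G) : coset_lam_fun y (f w) = f (lam y w).
Proof. by apply: coset_lam; rewrite ?coset_reprK. Qed.

Lemma coset_lam_fun_inj (y : G) : injective (coset_lam_fun y).
Proof.
apply: (can_inj (g := coset_lam_fun y^-1)) => c.
by rewrite -(coset_reprK c) !coset_lam_funE lamK.
Qed.

Definition coset_lam_perm (y : G) : {perm coset_of N} :=
  perm (@coset_lam_fun_inj y).

Lemma coset_lam_permE (y w : G) : coset_lam_perm y (f w) = f (lam y w).
Proof. by rewrite permE coset_lam_funE. Qed.

Lemma coset_lam_permX (y w : G) k :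
  (coset_lam_perm y ^+ k) (f w) = f (lam (y ^+ k) w).
Proof.
elim: k w => [|k IHk] w; first by rewrite perm1 lam1g.
by rewrite expgSr permM IHk coset_lam_permE -lamM -expgS.
Qed.

End IdealQuotient.

Section PrimeFactor.
Variables (T : finType) (B : skew_brace T) (I0 I1 : {set T}).
Hypotheses (h0 : is_ideal B I0) (h1 : is_ideal B I1).
Hypotheses (sub01 : I0 \subset I1) (p_pr : prime (#|I1| %/ #|I0|)).
Local Notation G := (circ_group B).
Local Notation N := (ideal_group h0).
Local Notation S := (ideal_group h1).
Local Notation f := (coset N).
Local Notation p := (#|I1| %/ #|I0|)%N.

Lemma ideal_group_sub : N \subset S.
Proof.
by apply/subsetP => x; rewrite !mem_ideal_group; apply: (subsetP sub01).
Qed.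

Lemma card_ideal_factor : #|S / N| = p.
Proof.
rewrite card_quotient; last by apply/subsetP => x _; apply: ideal_norm.
by rewrite -divgS ?ideal_group_sub // !card_ideal_group.
Qed.

Lemma coset_mem_factor (w : G) : (f w \in S / N) = (w \in S).
Proof.
apply/idP/idP => [|/mem_quotient //].
case/morphimP => x _ xS /ideal_coset_eq[n nN ->].
by rewrite groupM // (subsetP ideal_group_sub).
Qed.

Lemma ideal_factor_expp (y : G) : y \in S -> y ^+ p \in N.
Proof.
move=> yS; apply: coset_idr; first exact: ideal_norm.
by rewrite morphX ?ideal_norm // -card_ideal_factor expg_cardG // mem_quotient.
Qed.

Lemma lam_factor_trivial (y z : G) : y \in S -> z \in S -> f (lam y z) = f z.
Proof.
move=> yS zS; pose s := coset_lam_perm h0 y.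
have s_p : s ^+ p = 1.
  apply/permP => c; rewrite perm1 -(coset_reprK c) coset_lam_permX.
  by rewrite coset_lam_ideal // ideal_factor_expp.
have s_stable c : (s c \in S / N) = (c \in S / N).
  by rewrite -(coset_reprK c) coset_lam_permE !coset_mem_factor mem_ideal_lam.
have s1 : s (f 1) = f 1 by rewrite coset_lam_permE lamg1.
have := perm_prime_fix p_pr s_p card_ideal_factor s_stable
  (mem_quotient _ (group1 S)) s1.
by move/(_ (f z) (mem_quotient _ zS)); rewrite coset_lam_permE.
Qed.

Lemma rho_factor_trivial (y z : G) : y \in S -> z \in S -> f (rho z y) = f y.
Proof.
move=> yS zS; have fyz : commute (f y) (f z).
  have cyc : cyclic (S / N) by apply: prime_cyclic; rewrite card_ideal_factor.
  by apply: (centsP (cyclic_abelian cyc)); apply: mem_quotient.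
by rewrite /rho !ideal_cosetM ideal_cosetV lam_factor_trivial // -mulgA fyz mulKg.
Qed.

Lemma prime_factor_step :
  exists (Y : eqType) (s : Y * Y -> Y * Y) (g : T -> Y),
  [/\ is_solution s /\ is_sol_morphism (sb_solution B) s g,
      (exists x, I0 = [set y | g y == g x]),
      (forall x, #|[set y | g y == g x]| = #|I0|),
      (forall x y, g x = g y -> x \in I1 -> y \in I1) /\
      (forall x, [set sol_lambda (sb_solution B) x y | y in I1] = I1 /\
                 [set sol_rho (sb_solution B) x y | y in I1] = I1) &
      ((forall y z, y \in I1 -> z \in I1 -> s (g y, g z) = (g z, g y)) /\
       prime (size (undup [seq g x | x <- enum I1])))].
Proof.
exists (coset_of N), (quotient_solution (hI := h0)), f; split.
- by split; [apply: quotient_solution_is_solution | apply: coset_sol_morphism].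
- by exists (sb_zero B); rewrite coset_class1.
- exact: card_coset_class.
- split=> [x y fxy | x]; last first.
    by split; [apply: ideal_lam_image | apply: ideal_rho_image].
  by rewrite -!(mem_ideal_group h1) -!coset_mem_factor fxy.
- split=> [y z yI zI | ]; last by rewrite size_undup_coset card_ideal_factor.
  rewrite quotient_solutionE lam_factor_trivial ?rho_factor_trivial //.
  all: by rewrite mem_ideal_group.
Qed.

End PrimeFactor.

Theorem theorem2p5 (T : finType) (B : skew_brace T) :
  supersoluble_brace B ->
  supersoluble_solution_at (sb_solution B) (sb_zero B).
Proof.
case=> m [I [I0 Im ideal_I chain_I]]; exists m, I; split=> // i lt_im.
  by case: (chain_I i lt_im).
have [sub_I p_I] := chain_I i lt_im.
exact: prime_factor_step (ideal_I i (ltnW lt_im)) (ideal_I i.+1 lt_im) sub_I p_I.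
Qed.
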